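(* Let $A$ be an essential Banach algebra and $X$ a Banach $A$-bimodule. Then for all integers $n\geq 3$, $Mul_{n-1}(A,X)=Mul_{n}(A,X)$. In particular $Mul_{2}(A,X)=Mul_{n}(A,X)$ for all $n\geq 2$.
   Context: A Banach algebra $A$ is essential if $\overline{A^2}=A$, where $A^2=\mathrm{span}\{ab:a,b\in A\}$. For $n\ge 2$, a bounded linear map $T:A\to X$ is an $n$-multiplier if $T(a_1\cdots a_n)=a_1\cdot T(a_2\cdots a_n)=T(a_1\cdots a_{n-1})\cdot a_n$ for all $a_i\in A$; $Mul_n(A,X)$ is the set of all $n$-multipliers from $A$ into $X$. *)

From Stdlib Require Import Reals.
Open Scope R_scope.
Set Implicit Arguments.

Record BanachSpace := MkBanachSpace {
  bs_car :> Type;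
  bs_zero : bs_car;
  bs_add : bs_car -> bs_car -> bs_car;
  bs_opp : bs_car -> bs_car;
  bs_scal : R -> bs_car -> bs_car;
  bs_norm : bs_car -> R;
  bs_add_assoc : forall x y z, bs_add x (bs_add y z) = bs_add (bs_add x y) z;
  bs_add_comm : forall x y, bs_add x y = bs_add y x;
  bs_add_0 : forall x, bs_add x bs_zero = x;
  bs_add_opp : forall x, bs_add x (bs_opp x) = bs_zero;
  bs_scal_assoc : forall a b x, bs_scal a (bs_scal b x) = bs_scal (a * b) x;
  bs_scal_1 : forall x, bs_scal 1 x = x;
  bs_scal_distr_l : forall a x y, bs_scal a (bs_add x y) = bs_add (bs_scal a x) (bs_scal a y);
  bs_scal_distr_r : forall a b x, bs_scal (a + b) x = bs_add (bs_scal a x) (bs_scal b x);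
  bs_norm_eq0 : forall x, bs_norm x = 0 -> x = bs_zero;
  bs_norm_triangle : forall x y, bs_norm (bs_add x y) <= bs_norm x + bs_norm y;
  bs_norm_scal : forall a x, bs_norm (bs_scal a x) = Rabs a * bs_norm x;
  bs_complete : forall u : nat -> bs_car,
    (forall eps, 0 < eps -> exists N, forall m n, (N <= m)%nat -> (N <= n)%nat ->
        bs_norm (bs_add (u m) (bs_opp (u n))) < eps) ->
    exists l, forall eps, 0 < eps -> exists N, forall n, (N <= n)%nat ->
        bs_norm (bs_add (u n) (bs_opp l)) < eps
}.

Arguments bs_zero {b} : rename.

Record BanachAlgebra := MkBanachAlgebra {
  ba_space :> BanachSpace;
  ba_mul : ba_space -> ba_space -> ba_space;
  ba_mul_assoc : forall a b c, ba_mul a (ba_mul b c) = ba_mul (ba_mul a b) c;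
  ba_mul_add_l : forall a b c, ba_mul (bs_add _ a b) c = bs_add _ (ba_mul a c) (ba_mul b c);
  ba_mul_add_r : forall a b c, ba_mul a (bs_add _ b c) = bs_add _ (ba_mul a b) (ba_mul a c);
  ba_mul_scal_l : forall t a b, ba_mul (bs_scal _ t a) b = bs_scal _ t (ba_mul a b);
  ba_mul_scal_r : forall t a b, ba_mul a (bs_scal _ t b) = bs_scal _ t (ba_mul a b);
  ba_norm_mul : forall a b, bs_norm _ (ba_mul a b) <= bs_norm _ a * bs_norm _ b
}.

Record BanachBimodule (A : BanachAlgebra) := MkBanachBimodule {
  bm_space :> BanachSpace;
  bm_lact : A -> bm_space -> bm_space;
  bm_ract : bm_space -> A -> bm_space;
  bm_lact_add_l : forall a b x, bm_lact (bs_add _ a b) x = bs_add _ (bm_lact a x) (bm_lact b x);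
  bm_lact_add_r : forall a x y, bm_lact a (bs_add _ x y) = bs_add _ (bm_lact a x) (bm_lact a y);
  bm_lact_scal_l : forall t a x, bm_lact (bs_scal _ t a) x = bs_scal _ t (bm_lact a x);
  bm_lact_scal_r : forall t a x, bm_lact a (bs_scal _ t x) = bs_scal _ t (bm_lact a x);
  bm_ract_add_l : forall x y a, bm_ract (bs_add _ x y) a = bs_add _ (bm_ract x a) (bm_ract y a);
  bm_ract_add_r : forall x a b, bm_ract x (bs_add _ a b) = bs_add _ (bm_ract x a) (bm_ract x b);
  bm_ract_scal_l : forall t x a, bm_ract (bs_scal _ t x) a = bs_scal _ t (bm_ract x a);
  bm_ract_scal_r : forall t x a, bm_ract x (bs_scal _ t a) = bs_scal _ t (bm_ract x a);
  bm_lact_assoc : forall a b x, bm_lact a (bm_lact b x) = bm_lact (ba_mul A a b) x;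
  bm_ract_assoc : forall x a b, bm_ract (bm_ract x a) b = bm_ract x (ba_mul A a b);
  bm_lr_assoc : forall a x b, bm_ract (bm_lact a x) b = bm_lact a (bm_ract x b);
  bm_bounded : exists C, 0 <= C /\ forall a x,
    bs_norm _ (bm_lact a x) <= C * bs_norm _ a * bs_norm _ x /\
    bs_norm _ (bm_ract x a) <= C * bs_norm _ a * bs_norm _ x
}.

Inductive in_A2 (A : BanachAlgebra) : A -> Prop :=
| A2_zero : in_A2 A bs_zero
| A2_prod : forall a b, in_A2 A (ba_mul A a b)
| A2_add : forall x y, in_A2 A x -> in_A2 A y -> in_A2 A (bs_add _ x y)
| A2_scal : forall t x, in_A2 A x -> in_A2 A (bs_scal _ t x).

Definition in_closure (E : BanachSpace) (S : E -> Prop) (x : E) : Prop :=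
  forall eps, 0 < eps -> exists y, S y /\ bs_norm _ (bs_add _ x (bs_opp _ y)) < eps.

Definition essential (A : BanachAlgebra) : Prop :=
  forall a : A, @in_closure (ba_space A) (in_A2 A) a.

Definition bounded_linear (E F : BanachSpace) (T : E -> F) : Prop :=
  (forall x y, T (bs_add _ x y) = bs_add _ (T x) (T y)) /\
  (forall t x, T (bs_scal _ t x) = bs_scal _ t (T x)) /\
  (exists M, forall x, bs_norm _ (T x) <= M * bs_norm _ x).

(* prodS a i k = a_i a_{i+1} ... a_{i+k}  (k+1 factors) *)
Fixpoint prodS {A : BanachAlgebra} (a : nat -> A) (i k : nat) : A :=
  match k with
  | O => a i
  | S k' => ba_mul A (a i) (prodS a (S i) k')
  end.

(* T is an n-multiplier (n >= 2): with factors a_0, ..., a_{n-1},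
   T(a_0...a_{n-1}) = a_0 . T(a_1...a_{n-1}) = T(a_0...a_{n-2}) . a_{n-1}. *)
Definition is_n_multiplier (A : BanachAlgebra) (X : BanachBimodule A) (n : nat)
    (T : A -> X) : Prop :=
  @bounded_linear (ba_space A) (bm_space X) T /\
  forall a : nat -> A,
    T (prodS a 0 (n - 1)) = bm_lact X (a 0%nat) (T (prodS a 1 (n - 2))) /\
    T (prodS a 0 (n - 1)) = bm_ract X (T (prodS a 0 (n - 2))) (a (n - 1)%nat).

Definition Mul (A : BanachAlgebra) (X : BanachBimodule A) (n : nat) : (A -> X) -> Prop :=
  fun T => is_n_multiplier X n T.

(* A bounded map T : A -> X is an n-multiplier iff it satisfies
   T(x P) = x . T(P) and T(P c) = T(P) . c for every (n-1)-fold product P.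
   Grouping two adjacent factors of an n-fold product into one shows that every
   (n-1)-multiplier is an n-multiplier.  Conversely, for an n-multiplier both sides
   of the (n-1)-identities are bounded linear in the first factor of P and agree
   whenever that factor is a product b c; since A^2 is dense in an essential
   algebra, they agree everywhere. *)
From Stdlib Require Import Reals.
From Stdlib Require Import Lra Lia FunctionalExtensionality.
Set Implicit Arguments.

Local Arguments bounded_linear {E F} T.
Local Arguments in_closure {E} S x.

Section BanachSpaceFacts.
Context {E : BanachSpace}.

Lemma bs_add_0_l (x : E) : bs_add E bs_zero x = x.
Proof. rewrite bs_add_comm. apply bs_add_0. Qed.

Lemma bs_add_idem_eq0 (u : E) : bs_add E u u = u -> u = bs_zero.
Proof.
  intro Huu. rewrite <- (bs_add_opp E u). rewrite <- Huu at 2.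
  rewrite <- bs_add_assoc, bs_add_opp, bs_add_0. reflexivity.
Qed.

Lemma bs_scal0 (x : E) : bs_scal E 0 x = bs_zero.
Proof. apply bs_add_idem_eq0. rewrite <- bs_scal_distr_r, Rplus_0_r. reflexivity. Qed.

Lemma bs_scal_zero (t : R) : bs_scal E t bs_zero = bs_zero.
Proof. rewrite <- (bs_scal0 bs_zero) at 1. rewrite bs_scal_assoc, Rmult_0_r. apply bs_scal0. Qed.

Lemma bs_opp_scalN1 (x : E) : bs_opp E x = bs_scal E (-1) x.
Proof.
  assert (Hinv : bs_add E x (bs_scal E (-1) x) = bs_zero).
  { rewrite <- (bs_scal_1 E x) at 1. rewrite <- bs_scal_distr_r.
    replace (1 + -1) with 0 by ring. apply bs_scal0. }
  rewrite <- (bs_add_0 E (bs_opp E x)), <- Hinv, bs_add_assoc.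
  rewrite (bs_add_comm E (bs_opp E x)), bs_add_opp. apply bs_add_0_l.
Qed.

Lemma bs_opp_add (x y : E) :
  bs_opp E (bs_add E x y) = bs_add E (bs_opp E x) (bs_opp E y).
Proof. rewrite !bs_opp_scalN1. apply bs_scal_distr_l. Qed.

Lemma bs_opp_scal (t : R) (x : E) : bs_opp E (bs_scal E t x) = bs_scal E t (bs_opp E x).
Proof. rewrite !bs_opp_scalN1, !bs_scal_assoc, Rmult_comm. reflexivity. Qed.

Lemma bs_norm_opp (x : E) : bs_norm E (bs_opp E x) = bs_norm E x.
Proof. rewrite bs_opp_scalN1, bs_norm_scal, Rabs_left by lra. ring. Qed.

Lemma bs_norm_zero : bs_norm E bs_zero = 0.
Proof. rewrite <- (bs_scal0 bs_zero), bs_norm_scal, Rabs_R0. ring. Qed.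

Lemma bs_norm_ge0 (x : E) : 0 <= bs_norm E x.
Proof.
  pose proof (bs_norm_triangle E x (bs_opp E x)) as Htri.
  rewrite bs_add_opp, bs_norm_zero, bs_norm_opp in Htri. lra.
Qed.

Lemma bs_subK (x y : E) : bs_add E (bs_add E x (bs_opp E y)) y = x.
Proof.
  rewrite <- bs_add_assoc, (bs_add_comm E (bs_opp E y)), bs_add_opp. apply bs_add_0.
Qed.

Lemma bs_sub_eq0 (x y : E) : bs_add E x (bs_opp E y) = bs_zero -> x = y.
Proof. intro Hxy. rewrite <- (bs_subK x y), Hxy. apply bs_add_0_l. Qed.

Lemma bs_add_ACA (a b c d : E) :
  bs_add E (bs_add E a b) (bs_add E c d) = bs_add E (bs_add E a c) (bs_add E b d).
Proof.
  rewrite !bs_add_assoc. f_equal.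
  rewrite <- !bs_add_assoc. f_equal. apply bs_add_comm.
Qed.

End BanachSpaceFacts.

Lemma bounded_linear_zero {E F : BanachSpace} (T : E -> F) : bounded_linear T -> T bs_zero = bs_zero.
Proof.
  intros [_ [Hscal _]]. rewrite <- (bs_scal0 bs_zero), Hscal. apply bs_scal0.
Qed.

Lemma bounded_linear_bound_ge0 {E F : BanachSpace} (T : E -> F) : bounded_linear T ->
  exists M, 0 <= M /\ forall x, bs_norm F (T x) <= M * bs_norm E x.
Proof.
  intros [_ [_ [M HM]]]. exists (Rabs M). split; [apply Rabs_pos|].
  intro x. eapply Rle_trans; [apply HM|].
  apply Rmult_le_compat_r; [apply bs_norm_ge0 | apply Rle_abs].
Qed.

Lemma bounded_linear_id {E : BanachSpace} : bounded_linear (fun x : E => x).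
Proof. split; [auto | split; [auto|]]. exists 1. intro; lra. Qed.

Lemma bounded_linear_comp {E F G : BanachSpace} (f : E -> F) (g : F -> G) :
  bounded_linear f -> bounded_linear g -> bounded_linear (fun x => g (f x)).
Proof.
  intros Hf Hg.
  destruct (bounded_linear_bound_ge0 Hf) as [Mf [_ HMf]].
  destruct (bounded_linear_bound_ge0 Hg) as [Mg [Mg0 HMg]].
  destruct Hf as [fadd [fscal _]]. destruct Hg as [gadd [gscal _]].
  split; [intros; rewrite fadd, gadd; auto|].
  split; [intros; rewrite fscal, gscal; auto|].
  exists (Mg * Mf). intro x. eapply Rle_trans; [apply HMg|].
  rewrite Rmult_assoc. apply Rmult_le_compat_l; auto.
Qed.

Lemma bounded_linear_sub {E F : BanachSpace} (f g : E -> F) :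
  bounded_linear f -> bounded_linear g ->
  bounded_linear (fun x => bs_add F (f x) (bs_opp F (g x))).
Proof.
  intros Hf Hg.
  destruct (bounded_linear_bound_ge0 Hf) as [Mf [_ HMf]].
  destruct (bounded_linear_bound_ge0 Hg) as [Mg [_ HMg]].
  destruct Hf as [fadd [fscal _]]. destruct Hg as [gadd [gscal _]].
  split; [intros; rewrite fadd, gadd, bs_opp_add; apply bs_add_ACA|].
  split; [intros; rewrite fscal, gscal, bs_opp_scal, bs_scal_distr_l; auto|].
  exists (Mf + Mg). intro x. eapply Rle_trans; [apply bs_norm_triangle|].
  rewrite bs_norm_opp. specialize (HMf x). specialize (HMg x). lra.
Qed.

Lemma bounded_linear_eq0_closure {E F : BanachSpace} (S : E -> Prop) (d : E -> F) :
  bounded_linear d -> (forall y, S y -> d y = bs_zero) ->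
  forall x, in_closure S x -> d x = bs_zero.
Proof.
  intros Hd HS x Hx.
  destruct (bounded_linear_bound_ge0 Hd) as [M [M0 HM]].
  destruct Hd as [dadd _].
  apply bs_norm_eq0. pose proof (bs_norm_ge0 (d x)) as Hdx0.
  destruct (Req_dec (bs_norm F (d x)) 0) as [|Hdx]; [assumption | exfalso].
  destruct (Hx (bs_norm F (d x) / (M + 1))) as [y [Sy Hxy]].
  { apply Rdiv_lt_0_compat; lra. }
  assert (Hdiff : d x = d (bs_add E x (bs_opp E y))).
  { rewrite <- (bs_subK x y) at 1. rewrite dadd, (HS y Sy), bs_add_0. reflexivity. }
  pose proof (HM (bs_add E x (bs_opp E y))) as Hbound. rewrite <- Hdiff in Hbound.
  pose proof (bs_norm_ge0 (bs_add E x (bs_opp E y))).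
  assert (Hinv : (M + 1) * / (M + 1) = 1) by (field; lra).
  unfold Rdiv in Hxy. nra.
Qed.

Section Essential.
Context {A : BanachAlgebra}.

Lemma bounded_linear_mull (c : A) : bounded_linear (fun x => ba_mul A c x).
Proof.
  split; [intros; apply ba_mul_add_r | split; [intros; apply ba_mul_scal_r|]].
  exists (bs_norm A c). intro x. apply ba_norm_mul.
Qed.

Lemma bounded_linear_mulr (c : A) : bounded_linear (fun x => ba_mul A x c).
Proof.
  split; [intros; apply ba_mul_add_l | split; [intros; apply ba_mul_scal_l|]].
  exists (bs_norm A c). intro x. rewrite Rmult_comm. apply ba_norm_mul.
Qed.

Lemma bounded_linear_eq0_A2 (F : BanachSpace) (d : A -> F) :
  bounded_linear d -> (forall b c, d (ba_mul A b c) = bs_zero) ->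
  forall y, in_A2 A y -> d y = bs_zero.
Proof.
  intros Hd Hprod y Hy. pose proof (bounded_linear_zero Hd) as Hd0.
  destruct Hd as [dadd [dscal _]].
  induction Hy as [| | x y _ IHx _ IHy | t x _ IHx].
  - exact Hd0.
  - apply Hprod.
  - rewrite dadd, IHx, IHy. apply bs_add_0.
  - rewrite dscal, IHx. apply bs_scal_zero.
Qed.

Lemma essential_bounded_linear_eq (F : BanachSpace) (g h : A -> F) :
  essential A -> bounded_linear g -> bounded_linear h ->
  (forall b c, g (ba_mul A b c) = h (ba_mul A b c)) -> forall x, g x = h x.
Proof.
  intros Hess Hg Hh Hprod x. apply bs_sub_eq0.
  pose proof (bounded_linear_sub Hg Hh) as Hd.
  apply (bounded_linear_eq0_closure (S := in_A2 A) Hd); [|apply Hess].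
  apply (bounded_linear_eq0_A2 Hd). intros b c. rewrite Hprod. apply bs_add_opp.
Qed.

End Essential.

Section Multipliers.
Context {A : BanachAlgebra} {X : BanachBimodule A}.

Lemma bounded_linear_lact (c : A) : bounded_linear (fun y : X => bm_lact X c y).
Proof.
  split; [intros; apply bm_lact_add_r | split; [intros; apply bm_lact_scal_r|]].
  destruct (bm_bounded X) as [C [_ HC]].
  exists (C * bs_norm A c). intro y. apply (HC c y).
Qed.

Lemma bounded_linear_ract (c : A) : bounded_linear (fun y : X => bm_ract X y c).
Proof.
  split; [intros; apply bm_ract_add_l | split; [intros; apply bm_ract_scal_l|]].
  destruct (bm_bounded X) as [C [_ HC]].
  exists (C * bs_norm A c). intro y. apply (HC c y).
Qed.

Definition scons (x : A) (r : nat -> A) : nat -> A :=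
  fun j => match j with O => x | S j' => r j' end.

Lemma scons_eta (a : nat -> A) : a = scons (a 0%nat) (fun j => a (S j)).
Proof. apply functional_extensionality. intros [|j]; reflexivity. Qed.

Lemma prodS_shift (a : nat -> A) i m :
  prodS a (S i) m = prodS (fun j => a (S j)) i m.
Proof. revert i; induction m as [|m IHm]; intro i; simpl; rewrite ?IHm; reflexivity. Qed.

Lemma prodS_ext (a b : nat -> A) i m :
  (forall j, (i <= j <= i + m)%nat -> a j = b j) -> prodS a i m = prodS b i m.
Proof.
  revert i; induction m as [|m IHm]; intros i Hab; simpl.
  - apply Hab; lia.
  - rewrite (Hab i) by lia. rewrite (IHm (S i)) by (intros; apply Hab; lia).
    reflexivity.
Qed.

Lemma prodS_last (a : nat -> A) i m :
  prodS a i (S m) = ba_mul A (prodS a i m) (a (i + S m)%nat).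
Proof.
  revert i; induction m as [|m IHm]; intro i.
  - simpl. rewrite Nat.add_1_r. reflexivity.
  - change (prodS a i (S (S m))) with (ba_mul A (a i) (prodS a (S i) (S m))).
    rewrite IHm, ba_mul_assoc. simpl. rewrite <- !plus_n_Sm. reflexivity.
Qed.

Lemma prodS_scons_mul b c r m :
  prodS (scons (ba_mul A b c) r) 0 m = prodS (scons b (scons c r)) 0 (S m).
Proof.
  destruct m as [|m]; [reflexivity|].
  change (ba_mul A (ba_mul A b c) (prodS (scons (ba_mul A b c) r) 1 m) =
          ba_mul A b (ba_mul A c (prodS (scons b (scons c r)) 2 m))).
  rewrite ba_mul_assoc, !prodS_shift. reflexivity.
Qed.

Lemma bounded_linear_prodS_scons r m :
  bounded_linear (fun x => prodS (scons x r) 0 m).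
Proof.
  destruct m as [|m]; [apply bounded_linear_id|].
  replace (fun x => prodS (scons x r) 0 (S m)) with (fun x => ba_mul A x (prodS r 0 m));
    [apply bounded_linear_mulr|].
  apply functional_extensionality. intro x. simpl. rewrite prodS_shift. reflexivity.
Qed.

Lemma Mul_SS_iff p (T : A -> X) :
  Mul X (S (S p)) T <->
  bounded_linear T /\
  (forall x a, T (ba_mul A x (prodS a 0 p)) = bm_lact X x (T (prodS a 0 p))) /\
  (forall a c, T (ba_mul A (prodS a 0 p) c) = bm_ract X (T (prodS a 0 p)) c).
Proof.
  unfold Mul, is_n_multiplier.
  replace (S (S p) - 1)%nat with (S p) by lia.
  replace (S (S p) - 2)%nat with p by lia.
  split; intros [Hbl Hmul]; split; try exact Hbl.
  - split.
    + intros x a. destruct (Hmul (scons x a)) as [Hl _]. simpl in Hl.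
      rewrite !prodS_shift in Hl. exact Hl.
    + intros a c.
      set (a' := fun j => if Nat.eqb j (S p) then c else a j).
      assert (Ha' : prodS a' 0 p = prodS a 0 p).
      { apply prodS_ext. intros j Hj. unfold a'.
        destruct (Nat.eqb_spec j (S p)); [lia | reflexivity]. }
      destruct (Hmul a') as [_ Hr]. rewrite prodS_last, Ha' in Hr.
      unfold a' in Hr. rewrite Nat.add_0_l, Nat.eqb_refl in Hr. exact Hr.
  - destruct Hmul as [Hl Hr]. intro a. split.
    + simpl. rewrite prodS_shift. apply Hl.
    + rewrite prodS_last. apply Hr.
Qed.

Lemma Mul_succ p (T : A -> X) : Mul X (S (S p)) T -> Mul X (S (S (S p))) T.
Proof.
  rewrite !Mul_SS_iff. intros [Hbl [Hl Hr]]. split; [exact Hbl | split].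
  - intros x a. simpl. rewrite prodS_shift, ba_mul_assoc, Hl, <- bm_lact_assoc, <- Hl.
    reflexivity.
  - intros a c. rewrite prodS_last, <- ba_mul_assoc, Hr, <- bm_ract_assoc, <- Hr.
    reflexivity.
Qed.

Lemma Mul_pred_essential p (T : A -> X) :
  essential A -> Mul X (S (S (S p))) T -> Mul X (S (S p)) T.
Proof.
  intro Hess. rewrite !Mul_SS_iff. intros [Hbl [Hl Hr]]. split; [exact Hbl | split].
  - intros x a. rewrite (scons_eta a).
    generalize (a 0%nat) (fun j => a (S j)). intros y r. revert y.
    apply (essential_bounded_linear_eq Hess).
    + apply (bounded_linear_comp (g := fun z => T (ba_mul A x z))
               (bounded_linear_prodS_scons r p)).
      exact (bounded_linear_comp (bounded_linear_mull x) Hbl).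
    + apply (bounded_linear_comp (g := fun z => bm_lact X x (T z))
               (bounded_linear_prodS_scons r p)).
      exact (bounded_linear_comp Hbl (bounded_linear_lact x)).
    + intros b c. rewrite prodS_scons_mul. apply Hl.
  - intros a c. rewrite (scons_eta a).
    generalize (a 0%nat) (fun j => a (S j)). intros y r. revert y.
    apply (essential_bounded_linear_eq Hess).
    + apply (bounded_linear_comp (g := fun z => T (ba_mul A z c))
               (bounded_linear_prodS_scons r p)).
      exact (bounded_linear_comp (bounded_linear_mulr c) Hbl).
    + apply (bounded_linear_comp (g := fun z => bm_ract X (T z) c)
               (bounded_linear_prodS_scons r p)).
      exact (bounded_linear_comp Hbl (bounded_linear_ract c)).
    + intros b c'. rewrite prodS_scons_mul. apply Hr.
Qed.

Lemma Mul_pred_iff n (T : A -> X) :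
  essential A -> (3 <= n)%nat -> Mul X (n - 1) T <-> Mul X n T.
Proof.
  intros Hess Hn. destruct n as [|[|[|p]]]; try lia.
  replace (S (S (S p)) - 1)%nat with (S (S p)) by lia.
  split; [apply Mul_succ | apply Mul_pred_essential, Hess].
Qed.

End Multipliers.

Theorem theorem2p4 (A : BanachAlgebra) (X : BanachBimodule A) :
  essential A ->
  (forall n : nat, (3 <= n)%nat -> forall T : A -> X, Mul X (n - 1) T <-> Mul X n T) /\
  (forall n : nat, (2 <= n)%nat -> forall T : A -> X, Mul X 2 T <-> Mul X n T).
Proof.
  intro Hess. split.
  - intros n Hn T. exact (Mul_pred_iff T Hess Hn).
  - intros n Hn T. induction Hn as [|m Hm IHm]; [reflexivity|].
    rewrite IHm, <- (Mul_pred_iff T Hess (le_n_S _ _ Hm)).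
    replace (S m - 1)%nat with m by lia. reflexivity.
Qed.
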